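(* For every integer $a\geq 3$ and every integer $m\geq 2a^2-a+2$, the 2-color Rado number of the equation $L(m,a)$ equals $C(m,a)=\left\lceil \frac{m-1}{a}\left\lceil \frac{m-1}{a}\right\rceil\right\rceil$.
   Context: For integers $m\geq 3$, $a\geq 1$, $L(m,a)$ denotes the equation $x_1+x_2+\cdots+x_{m-1}=a x_m$. For a positive integer $n$, $[n]=\{1,\dots,n\}$. A solution of $L(m,a)$ in $[n]$ is an $m$-tuple $(x_1,\dots,x_m)\in[n]^m$ (entries not necessarily distinct) satisfying the equation; given a 2-coloring of $[n]$, it is monochromatic if all $x_i$ have the same color. The 2-color Rado number of $L(m,a)$ is the least positive integer $n$ such that every 2-coloring of $[n]$ admits a monochromatic solution of $L(m,a)$ in $[n]$. $C(m,a)$ denotes $\left\lceil \frac{m-1}{a}\left\lceil \frac{m-1}{a}\right\rceil\right\rceil$. *)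

From mathcomp Require Import all_boot.
Set Implicit Arguments. Unset Strict Implicit. Unset Printing Implicit Defensive.

Definition ceil_div (p q : nat) : nat := (p + q - 1) %/ q.

(* C(m,a) = ceil( (m-1)/a * ceil((m-1)/a) ) = ceil( (m-1)*ceil((m-1)/a) / a ) *)
Definition C_ma (m a : nat) : nat := ceil_div ((m - 1) * ceil_div (m - 1) a) a.

(* An m-tuple (x_1,...,x_m) is represented by x : nat -> nat with
   x_k = x (k-1) for k = 1..m (values of x at indices >= m are irrelevant).
   It solves L(m,a) iff x_1 + ... + x_{m-1} = a * x_m. *)
Definition is_solution (m a : nat) (x : nat -> nat) : Prop :=
  \sum_(i < m.-1) x i = a * x m.-1.

Definition in_range (n m : nat) (x : nat -> nat) : Prop :=
  forall i, i < m -> 1 <= x i <= n.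

(* a 2-coloring of [n] is a function c : nat -> bool (values outside [n]
   irrelevant); monochromatic: all entries get the same colour *)
Definition monochromatic (m : nat) (c : nat -> bool) (x : nat -> nat) : Prop :=
  forall i j, i < m -> j < m -> c (x i) = c (x j).

Definition rado_property (m a n : nat) : Prop :=
  forall c : nat -> bool, exists x : nat -> nat,
    [/\ in_range n m x, is_solution m a x & monochromatic m c x].

Definition is_rado_number (m a n : nat) : Prop :=
  0 < n /\ rado_property m a n /\ (forall k, 0 < k < n -> ~ rado_property m a k).

From mathcomp Require Import all_boot.
From mathcomp Require Import zify.
From Stdlib Require Import Classical.

Set Implicit Arguments. Unset Strict Implicit. Unset Printing Implicit Defensive.

(* The 2-colour Rado number of L(m,a) for a >= 3 and m >= 2a^2 - a + 2.
   Write k = m - 1, t = ceil(k/a) and C = ceil(k t / a) = C(m,a).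

   Lower bound: colouring [1, t-1] red and [t, C-1] blue leaves no
   monochromatic solution, because k red summands are at least k > a(t-1)
   and k blue summands are at least k t > a(C-1).

   Upper bound: suppose a colouring of [C] has no monochromatic solution and
   let 1 be red.  Solutions are built from "sums of k elements of a colour
   class" (the predicate [sum_in] below), which can be concatenated, repeated
   and filled with any value between q*L and q*H out of an interval [L,H].
   With n = k - a + 1 one finds: n is blue; 2 is red (otherwise 1, n+1, 2n
   would all be red); if u is the least blue number then 3 <= u <= n and
   every y in [t, n(u-1)] is blue (a*y splits into copies of y and numbers
   below u); finally C or n(u-1) is the unknown of a blue solution. *)

Inductive sum_in (S : nat -> Prop) : nat -> nat -> Prop :=
| sum_in0 : sum_in S 0 0
| sum_inS q s v : sum_in S q s -> S v -> sum_in S q.+1 (s + v).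

Lemma sum_in_family S q s : sum_in S q s ->
  exists x : nat -> nat, (forall i, i < q -> S (x i)) /\ \sum_(i < q) x i = s.
Proof.
elim=> [|q' s' v _ [x [Sx <-]] Sv].
  by exists (fun _ => 0); split=> //; rewrite big_ord0.
exists (fun i => if i == q' then v else x i); split.
  by move=> i; rewrite ltnS leq_eqVlt; case: eqP => [->|_] //= /Sx.
rewrite big_ord_recr /= eqxx; congr (_ + _).
by apply: eq_bigr => i _; rewrite (ltn_eqF (ltn_ord i)).
Qed.

Lemma sum_in_eq S p s p' s' : p = p' -> s = s' -> sum_in S p s -> sum_in S p' s'.
Proof. by move=> -> ->. Qed.

Lemma sum_in_add S p s q r : sum_in S p s -> sum_in S q r -> sum_in S (p + q) (s + r).
Proof.
move=> Hp; elim=> [|q' r' v _ IH Sv]; first by rewrite !addn0.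
by rewrite addnS addnA; apply: sum_inS.
Qed.

Lemma sum_in_const S q v : S v -> sum_in S q (q * v).
Proof.
by move=> Sv; elim: q => [|q IH]; [apply: sum_in0 | rewrite mulSnr; apply: sum_inS].
Qed.

Lemma sum_in_two S p v q w : S v -> S w -> sum_in S (p + q) (p * v + q * w).
Proof. by move=> Sv Sw; apply: sum_in_add; apply: sum_in_const. Qed.

Lemma sum_in_interval S L H q s : (forall v, L <= v <= H -> S v) ->
  q * L <= s <= q * H -> sum_in S q s.
Proof.
move=> SLH; elim: q s => [|q IH] s.
  by rewrite !mul0n => /andP [_]; rewrite leqn0 => /eqP ->; apply: sum_in0.
move=> /andP [sL sH].
have [small|large] := leqP (s - q * L) H.
  have -> : s = q * L + (s - q * L) by lia.
  apply: sum_inS; first by apply: IH; rewrite leqnn /=; nia.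
  by apply: SLH; rewrite small andbT; nia.
have -> : s = (s - H) + H by lia.
by apply: sum_inS; [apply: IH; apply/andP; split; nia | apply: SLH; rewrite leqnn andbT; nia].
Qed.

(* Choosing how many of the a copies of y to keep: the remainder of a*y
   is spread over k - j numbers in [1, U]. *)
Lemma split_multiple a k y U : 1 <= a -> a <= k -> 2 <= U -> k <= a * y ->
  y <= (k - a + 1) * U ->
  exists j, [/\ j < a, k - j <= (a - j) * y & (a - j) * y <= (k - j) * U].
Proof.
move=> a1 ak U2 ky yU.
suff: forall d i, i + d = a - 1 -> k - i <= (a - i) * y ->
  exists j, [/\ j < a, k - j <= (a - j) * y & (a - j) * y <= (k - j) * U].
  by move=> /(_ (a - 1) 0); apply; [lia | rewrite !subn0].
elim=> [|d IH] i hi hk.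
  exists i; split; [lia | done |].
  have -> : a - i = 1 by lia.
  have -> : k - i = k - a + 1 by lia.
  by rewrite mul1n.
have [next|stop] := leqP (k - i.+1) ((a - i.+1) * y); first by apply: (IH i.+1); lia.
exists i; split; [lia | done |].
have -> : a - i = (a - i.+1).+1 by lia.
have -> : k - i = (k - i.+1).+1 by lia.
have A1 : 1 <= a - i.+1 by lia.
move: stop; set A := a - i.+1; set K := k - i.+1 => stop.
have yK : y < K by nia.
nia.
Qed.

Lemma sum_in_multiple S a k y U : 1 <= a -> a <= k -> 2 <= U ->
  k <= a * y -> y <= (k - a + 1) * U ->
  S y -> (forall v, 1 <= v <= U -> S v) -> sum_in S k (a * y).
Proof.
move=> a1 ak U2 ky yU Sy SU.
have [j [ja lo hi]] := split_multiple a1 ak U2 ky yU.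
apply: (sum_in_eq (p := j + (k - j)) (s := j * y + (a - j) * y));
  [lia | by rewrite -mulnDl subnKC; lia |].
apply: sum_in_add; first exact: sum_in_const.
by apply: (sum_in_interval SU); rewrite muln1 lo hi.
Qed.

Definition in_class (C : nat) (c : nat -> bool) (b : bool) (v : nat) : Prop :=
  1 <= v <= C /\ c v = b.

Lemma solution_of_sum m a C c b y : in_class C c b y ->
  sum_in (in_class C c b) m.-1 (a * y) ->
  exists x : nat -> nat, [/\ in_range C m x, is_solution m a x & monochromatic m c x].
Proof.
move=> Cy /sum_in_family [x [Cx sum_x]].
pose z i := if i < m.-1 then x i else y.
have Cz i : in_class C c b (z i) by rewrite /z; case: ifP => // /Cx.
exists z; split.
- by move=> i _; case: (Cz i).
- rewrite /is_solution /z ltnn -sum_x; apply: eq_bigr => i _; by rewrite ltn_ord.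
- by move=> i j _ _; rewrite (Cz i).2 (Cz j).2.
Qed.

Lemma sum_ge k L (x : nat -> nat) : (forall i, i < k -> L <= x i) ->
  k * L <= \sum_(i < k) x i.
Proof.
move=> H; rewrite -[k in k * L]card_ord -sum_nat_const.
by apply: leq_sum => i _; apply: H.
Qed.

Lemma rado_fails_below a k t C n :
  a * t < k + a -> a * C < k * t + a -> n < C -> ~ rado_property k.+1 a n.
Proof.
move=> ht hC nC /(_ (fun v => v < t)) [x [Hin Hsol Hmono]].
rewrite /is_solution /= in Hsol.
have /andP [xk1 xkn] := Hin k (ltnSn k).
have [red|blue] := ltnP (x k) t.
- have := @sum_ge k 1 x (fun i ik => (andP (Hin i (ltnW ik))).1).
  rewrite Hsol; nia.
- have all_blue i : i < k -> t <= x i.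
    move=> ik; have := Hmono i k (ltnW ik) (ltnSn k).
    by rewrite /= [x k < t]ltnNge blue /=; case: ltnP.
  have := sum_ge all_blue; rewrite Hsol; nia.
Qed.

Lemma ceil_div_spec p q : 0 < q -> p <= q * ceil_div p q < p + q.
Proof.
move=> q0; rewrite /ceil_div.
have := divn_eq (p + q - 1) q; have := ltn_pmod (p + q - 1) q0.
set d := _ %/ _; set r := _ %% _ => r_lt p_eq; apply/andP; split; nia.
Qed.

Lemma bool_neq_eq (x y z : bool) : x != z -> y != z -> x = y.
Proof. by case: x; case: y; case: z. Qed.

(* Arithmetic core of the last step: enough room for k - a copies of u. *)
Lemma room_for_u a K w t : 3 <= a -> 2 <= w -> a * t < K + 2 * a -> a <= K ->
  a * t + K * (w + 1) <= a * ((K + 1) * w).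
Proof.
move=> a3 w2 ht aK.
have : 2 * K * w <= (a - 1) * K * w by rewrite -!mulnA leq_mul2r; lia.
nia.
Qed.

Section UpperBound.

Variables (a k t C : nat) (c : nat -> bool).
Hypothesis a3 : 3 <= a.
Hypothesis k_large : 2 * a * a - a + 1 <= k.
Hypothesis t_spec : k <= a * t < k + a.
Hypothesis C_spec : k * t <= a * C < k * t + a.

(* The colouring c of [C] has no monochromatic solution of L(k+1, a). *)
Hypothesis no_mono : forall b y, in_class C c b y -> ~ sum_in (in_class C c b) k (a * y).

Let n := k - a + 1.

Lemma pivot_bounds : [/\ a <= k, 2 * a <= t, t + 1 <= n & 2 * n <= C].
Proof. rewrite /n; split; nia. Qed.

Lemma color_forced b y : 1 <= y <= C ->
  (c y = b -> sum_in (in_class C c b) k (a * y)) -> c y != b.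
Proof. by move=> yC sum_y; apply/eqP => cy; apply: (no_mono (conj yC cy)); apply: sum_y. Qed.

(* n = k - a + 1 has the other colour than 1: a*n = (a-1) n + n * 1. *)
Lemma pivot_color : c n != c 1.
Proof.
have [ak _ _ nC] := pivot_bounds.
apply: color_forced => [|cn]; first lia.
apply: (sum_in_eq (p := (a - 1) + n) (s := (a - 1) * n + n * 1)); [lia | nia |].
by apply: sum_in_two; split=> //; lia.
Qed.

(* 2 has the colour of 1; otherwise n+1 and 2n get the colour of 1 and
   a*(2n) = (a-1)*(2n) + (n-1)*1 + (n+1) is monochromatic. *)
Lemma two_color : c 2 = c 1.
Proof.
have [ak ta tn nC] := pivot_bounds.
apply/eqP/negPn/negP => c2.
have cn1 : c (n + 1) != c 2.
  apply: color_forced => [|c_n1]; first lia.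
  apply: (sum_in_eq (p := (a - 2) + (n + 1)) (s := (a - 2) * (n + 1) + (n + 1) * 2));
    [lia | nia |].
  by apply: sum_in_two; split=> //; lia.
have c2n : c (2 * n) != c 2.
  apply: color_forced => [|c_2n]; first lia.
  apply: (sum_in_eq (p := (a - 1) + n) (s := (a - 1) * (2 * n) + n * 2)); [lia | nia |].
  by apply: sum_in_two; split=> //; lia.
have red v : c v != c 2 -> c v = c 1.
  by move=> cv; apply: bool_neq_eq cv _; rewrite eq_sym.
have red_2n : in_class C c (c 1) (2 * n) by split; [lia | exact: red].
apply: (no_mono red_2n).
apply: (sum_in_eq (p := (a - 1) + (n - 1) + 1)
                 (s := (a - 1) * (2 * n) + (n - 1) * 1 + 1 * (n + 1))); [lia | nia |].
apply: sum_in_add; [apply: sum_in_two |]; last apply: sum_in_const;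
  (split; [lia | exact: red || done]).
Qed.

Lemma first_change : exists u, [/\ 3 <= u <= n, c u != c 1 &
  forall v, 0 < v < u -> c v = c 1].
Proof.
have [_ _ tn _] := pivot_bounds.
have exP : exists v, (0 < v) && (c v != c 1) by exists n; rewrite pivot_color andbT; lia.
case: (ex_minnP exP) => u /andP [u0 cu] umin.
have below v : 0 < v < u -> c v = c 1.
  move=> /andP [v0 vu]; apply/eqP/negPn/negP => cv.
  by have := umin v; rewrite v0 cv => /(_ isT); lia.
exists u; split=> //; apply/andP; split; last by apply: umin; rewrite pivot_color andbT; lia.
case: u u0 cu {umin below} => [|[|[|u]]] //=.
  by rewrite eqxx.
by rewrite two_color eqxx.
Qed.

Section AboveChange.

Variable u : nat.
Hypothesis u_range : 3 <= u <= n.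
Hypothesis u_color : c u != c 1.
Hypothesis below_u : forall v, 0 < v < u -> c v = c 1.

Let N := n * (u - 1).

(* Every y in [t, N] (inside [C]) has the colour of u: a*y is made of
   copies of y and of numbers below u. *)
Lemma middle_color y : t <= y <= N -> y <= C -> c y = c u.
Proof.
move=> /andP [ty yN] yC; have [ak ta tn nC] := pivot_bounds.
apply: bool_neq_eq u_color; apply: color_forced => [|cy]; first lia.
apply: (@sum_in_multiple _ a k y (u - 1)); try lia.
- by apply: leq_trans (leq_mul (leqnn a) ty); lia.
- by split; [lia | done].
- by move=> v v_lt; split; [lia | apply: below_u; lia].
Qed.

(* Either C or N is the unknown of a monochromatic solution coloured like u:
   if C <= N, a*C is a sum of k numbers in [t, t+1];
   otherwise a*N is k - a copies of u plus a numbers in [t, N]. *)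
Lemma above_change_contra : False.
Proof.
have [ak ta tn nC] := pivot_bounds.
have tN : t <= N by rewrite /N; nia.
have tC : t + 1 <= C by nia.
have class_mid v : t <= v <= N -> v <= C -> in_class C c (c u) v.
  by move=> vN vC; split; [lia | exact: middle_color].
have [CN|NC] := leqP C N.
  apply: (no_mono (class_mid C _ _)); [lia | done |].
  apply: (@sum_in_interval _ t t.+1); last by rewrite mulnS; lia.
  by move=> v v_lt; apply: class_mid; lia.
apply: (no_mono (class_mid N _ _)); [lia | lia |].
have room : a * t + (k - a) * u <= a * N.
  have := @room_for_u a (k - a) (u - 1) t a3 ltac:(lia) ltac:(lia) ltac:(lia).
  by rewrite /N /n subnK; [rewrite addn1 | lia].
apply: (sum_in_eq (p := (k - a) + a) (s := (k - a) * u + (a * N - (k - a) * u)));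
  [lia | lia |].
apply: sum_in_add; first by apply: sum_in_const; split; [lia | done].
apply: (@sum_in_interval _ t N); last by lia.
by move=> v v_lt; apply: class_mid; lia.
Qed.

End AboveChange.

Lemma no_avoiding_coloring : False.
Proof.
have [u [u_range u_color below_u]] := first_change.
exact: (above_change_contra u_range u_color below_u).
Qed.

End UpperBound.

Theorem theorem1 (a m : nat) :
  3 <= a -> 2 * a ^ 2 - a + 2 <= m -> is_rado_number m a (C_ma m a).
Proof.
move=> a3 hm.
have [k mk] : exists k, m = k.+1 by exists m.-1; lia.
subst m.
have k_large : 2 * a * a - a + 1 <= k by move: hm; rewrite expnS expn1 mulnA; lia.
set t := ceil_div k a.
have t_spec : k <= a * t < k + a by apply: ceil_div_spec; lia.
have C_spec : k * t <= a * C_ma k.+1 a < k * t + a.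
  by rewrite /C_ma subn1 /=; apply: ceil_div_spec; lia.
have t_pos : 0 < t by move: t_spec; case: (t) => [|]; rewrite ?muln0; lia.
split; first by move: C_spec; case: (C_ma _ _) => [|]; rewrite ?muln0; nia.
split; last first.
  by move=> n /andP [_ nC]; apply: (rado_fails_below (t := t) (C := C_ma k.+1 a)); lia.
move=> c; apply: NNPP => no_solution.
apply: (no_avoiding_coloring a3 k_large t_spec C_spec (c := c)).
move=> b y y_class y_sum; apply: no_solution.
exact: (solution_of_sum (m := k.+1) y_class y_sum).
Qed.
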